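(* Let $(\mathcal A,\varphi,\mathcal F,\Phi)$ be a ncps of type B$'$ with associated infinitesimal ncps $(\mathcal B,\varphi,\varphi')$. Let $(\mathcal A_i)_{i\in I}$ be subalgebras of $\mathcal A$ containing $1_{\mathcal A}$ and $(\mathcal F_i)_{i\in I}$ subalgebras of $\mathcal F$, indexed by the same set $I$. Let $\mathcal B_i$ be the subalgebra of $\mathcal B$ generated by $\mathcal A_i\oplus\{0_{\mathcal F}\}$ and $\mathbb C1_{\mathcal A}\oplus\mathcal F_i$. If $(\mathcal A_i,\mathcal F_i)_{i\in I}$ is B$'$-free in $(\mathcal A,\varphi,\mathcal F,\Phi)$, then $(\mathcal B_i)_{i\in I}$ are infinitesimally free in $(\mathcal B,\varphi,\varphi')$.
   Context: Ncps of type B$'$ $(\mathcal A,\varphi,\mathcal F,\Phi)$: $\mathcal A$ unital complex algebra, $\varphi(1_{\mathcal A})=1$, $\mathcal F$ an algebra which is an $\mathcal A$-bimodule compatible with its multiplication, $\Phi:\mathcal F\to\mathbb C$ linear. $\mathcal B=\mathcal A\oplus\mathcal F$ with product $(a_1,f_1)(a_2,f_2)=(a_1a_2,a_1f_2+f_1a_2+f_1f_2)$, unit $1_{\mathcal A}$; $\varphi(a+f):=\varphi(a)$, $\varphi'(a+f):=\Phi(f)$. $(\mathcal A_i,\mathcal F_i)_{i\in I}$ is B$'$-free if: $(\mathcal A_i)$ are free w.r.t. $\varphi$ ($\varphi(c_1\cdots c_n)=0$ for alternating indices and centered $c_l\in\mathcal A_{i_l}$); with $\mathcal A_0$ the algebra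 generated by all $\mathcal A_i$ and $\mathcal F_0$ the algebra generated by all $\mathcal F_i$, $\Phi(c_0g_1c_1\cdots c_{n-1}g_nc_n)=\varphi(c_0c_n)\prod_{l=1}^{n-1}\varphi(c_l)\Phi(g_1\cdots g_n)$ for $c_l\in\mathcal A_0,g_l\in\mathcal F_0$; and $\Phi(g_1\cdots g_n)=0$ whenever $n\ge2$, $i_1\ne\cdots\ne i_n$, $g_l\in\mathcal F_{i_l}$. Infinitesimal freeness of unital subalgebras $(\mathcal B_i)$: for $i_1\ne\cdots\ne i_n$ and $b_l\in\mathcal B_{i_l}$ with $\varphi(b_l)=0$, $\varphi(b_1\cdots b_n)=0$ and $\varphi'(b_1\cdots b_n)=\varphi(b_1b_n)\varphi(b_2b_{n-1})\cdots\varphi(b_{(n-1)/2}b_{(n+3)/2})\varphi'(b_{(n+1)/2})$ if $n$ odd and $i_1=i_n,i_2=i_{n-1},\dots$, and $0$ otherwise. *)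

From mathcomp Require Import all_boot all_algebra.
From mathcomp Require Import reals complex.
Set Implicit Arguments. Unset Strict Implicit. Unset Printing Implicit Defensive.
Import GRing.Theory.
Local Open Scope ring_scope.

Section Defs.
Variable R : realType.
Local Notation C := (R[i]).

Definition lin_functional (V : lmodType C) (f : V -> C) : Prop :=
  forall (k : C) (x y : V), f (k *: x + y) = k * f x + f y.

(* ---------- F : a (not necessarily unital) complex algebra which is an
   A-bimodule compatible with its multiplication ---------- *)
Variable A : algType C.
Variable F : lmodType C.
Variables (fmul : F -> F -> F) (lact : A -> F -> F) (ract : F -> A -> F).

Definition bimodule_algebra : Prop :=
  (forall x y z, fmul (fmul x y) z = fmul x (fmul y z)) /\
  (forall (k : C) x y z, fmul (k *: x + y) z = k *: fmul x z + fmul y z) /\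
  (forall (k : C) x y z, fmul z (k *: x + y) = k *: fmul z x + fmul z y) /\
  (forall (k : C) (a b : A) f, lact (k *: a + b) f = k *: lact a f + lact b f) /\
  (forall (k : C) a (f g : F), lact a (k *: f + g) = k *: lact a f + lact a g) /\
  (forall (k : C) (a b : A) f, ract f (k *: a + b) = k *: ract f a + ract f b) /\
  (forall (k : C) a (f g : F), ract (k *: f + g) a = k *: ract f a + ract g a) /\
  (forall f, lact 1 f = f) /\
  (forall f, ract f 1 = f) /\
  (forall a b f, lact (a * b) f = lact a (lact b f)) /\
  (forall a b f, ract f (a * b) = ract (ract f a) b) /\
  (forall a b f, lact a (ract f b) = ract (lact a f) b) /\
  (forall a f g, lact a (fmul f g) = fmul (lact a f) g) /\
  (forall a f g, ract (fmul f g) a = fmul f (ract g a)) /\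
  (forall a f g, fmul (ract f a) g = fmul f (lact a g)).

Definition unital_subalgebra (S : A -> Prop) : Prop :=
  [/\ S 1, (forall (k : C) x y, S x -> S y -> S (k *: x + y)) &
      (forall x y, S x -> S y -> S (x * y))].

Definition subalgebraF (S : F -> Prop) : Prop :=
  [/\ S 0, (forall (k : C) x y, S x -> S y -> S (k *: x + y)) &
      (forall x y, S x -> S y -> S (fmul x y))].

Inductive genA (S : A -> Prop) : A -> Prop :=
| genA_base x : S x -> genA S x
| genA_one : genA S 1
| genA_lin (k : C) x y : genA S x -> genA S y -> genA S (k *: x + y)
| genA_mul x y : genA S x -> genA S y -> genA S (x * y).

Inductive genF (S : F -> Prop) : F -> Prop :=
| genF_base x : S x -> genF S x
| genF_zero : genF S 0
| genF_lin (k : C) x y : genF S x -> genF S y -> genF S (k *: x + y)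
| genF_mul x y : genF S x -> genF S y -> genF S (fmul x y).

(* products in F : fprodF g k = g 0 g 1 ... g k  (k+1 factors) *)
Fixpoint fprodF (g : nat -> F) (k : nat) : F :=
  match k with
  | 0 => g 0%N
  | k'.+1 => fmul (fprodF g k') (g k)
  end.

(* words c_0 g_0 c_1 g_1 c_2 ... g_k c_(k+1) *)
Fixpoint wordF (c : nat -> A) (g : nat -> F) (k : nat) : F :=
  match k with
  | 0 => ract (lact (c 0%N) (g 0%N)) (c 1%N)
  | k'.+1 => fmul (wordF c g k') (ract (g k) (c k.+1))
  end.

Definition alternating (I : Type) (ind : nat -> I) (n : nat) : Prop :=
  forall l, (l.+1 < n)%N -> ind l <> ind l.+1.

Definition Bprime_free (phi : A -> C) (Phi : F -> C) (I : Type)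
    (Ai : I -> A -> Prop) (Fi : I -> F -> Prop) : Prop :=
  let A0 := genA (fun a => exists i, Ai i a) in
  let F0 := genF (fun f => exists i, Fi i f) in
  [/\
      (forall (n : nat) (ind : nat -> I) (c : nat -> A),
         (0 < n)%N -> alternating ind n ->
         (forall l, (l < n)%N -> Ai (ind l) (c l) /\ phi (c l) = 0) ->
         phi (\prod_(l < n) c l) = 0),
      (forall (n : nat) (c : nat -> A) (g : nat -> F),
         (0 < n)%N ->
         (forall l, (l <= n)%N -> A0 (c l)) ->
         (forall l, (l < n)%N -> F0 (g l)) ->
         Phi (wordF c g n.-1) =
           phi (c 0%N * c n) * (\prod_(1 <= l < n) phi (c l)) * Phi (fprodF g n.-1)) &
      (forall (n : nat) (ind : nat -> I) (g : nat -> F),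
         (2 <= n)%N -> alternating ind n ->
         (forall l, (l < n)%N -> Fi (ind l) (g l)) ->
         Phi (fprodF g n.-1) = 0)].

Definition Btype : Type := (A * F)%type.
Definition badd (x y : Btype) : Btype := (x.1 + y.1, x.2 + y.2).
Definition bscale (k : C) (x : Btype) : Btype := (k *: x.1, k *: x.2).
Definition bmul (x y : Btype) : Btype :=
  (x.1 * y.1, lact x.1 y.2 + ract x.2 y.1 + fmul x.2 y.2).
Definition bone : Btype := (1, 0).
Definition bprod (b : nat -> Btype) (n : nat) : Btype :=
  foldr (fun l acc => bmul (b l) acc) bone (iota 0 n).

Definition phiB (phi : A -> C) (x : Btype) : C := phi x.1.
Definition phi'B (Phi : F -> C) (x : Btype) : C := Phi x.2.

Inductive genB (S : Btype -> Prop) : Btype -> Prop :=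
| genB_base x : S x -> genB S x
| genB_one : genB S bone
| genB_lin (k : C) x y : genB S x -> genB S y -> genB S (badd (bscale k x) y)
| genB_mul x y : genB S x -> genB S y -> genB S (bmul x y).

Definition Bsub (Ai : A -> Prop) (Fi : F -> Prop) : Btype -> Prop :=
  genB (fun x => (Ai x.1 /\ x.2 = 0) \/ (exists k : C, x.1 = k%:A /\ Fi x.2)).

Definition inf_free (phi : A -> C) (Phi : F -> C) (I : Type)
    (Bi : I -> Btype -> Prop) : Prop :=
  forall (n : nat) (ind : nat -> I) (b : nat -> Btype),
    (0 < n)%N -> alternating ind n ->
    (forall l, (l < n)%N -> Bi (ind l) (b l) /\ phiB phi (b l) = 0) ->
    let sym := odd n /\ (forall l, (l < n)%N -> ind l = ind (n.-1 - l)%N) in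
    [/\ phiB phi (bprod b n) = 0,
        sym -> phi'B Phi (bprod b n) =
               (\prod_(l < n./2) phiB phi (bmul (b l) (b (n.-1 - l)%N)))
               * phi'B Phi (b n./2) &
        ~ sym -> phi'B Phi (bprod b n) = 0].

End Defs.

From mathcomp Require Import all_boot all_algebra.
From mathcomp Require Import reals complex.
From Stdlib Require Import Classical.
From mathcomp Require Import zify.
Import GRing.Theory.
Local Open Scope ring_scope.
Set Implicit Arguments. Unset Strict Implicit. Unset Printing Implicit Defensive.

(* Write b_l = a_l + f_l, with a_l in A_(i_l) centred and f_l a combination of words
   c_0 g_0 c_1 ... g_m c_(m+1) with coefficients in A_(i_l) and letters in F_(i_l).
   The A-part of b_0 ... b_(n-1) is a_0 ... a_(n-1), which phi kills by freeness.
   The F-part is a sum of terms a_0 ... a_(p-1) f_p a_(p+1) ... a_(n-1) and of cross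
   terms in which a letter of f_p meets, through a_(p+1) ... a_(q-1), a letter of a
   later f_q.  Since Phi factors over a word as phi of its coefficients times Phi of
   its letters, a term of the first kind contributes
   phi (a_0 ... a_(p-1) x a_(p+1) ... a_(n-1)) with x = c_0 c_(m+1); centring x turns
   this into phi x * phi (a_0 ... a_(p-1) a_(p+1) ... a_(n-1)), and that free moment
   vanishes unless the indices form an odd palindrome centred at p, when it is
   prod_l phi (a_l a_(n-1-l)).  In a cross term, either i_p <> i_q and the letters do
   not all come from one F_i, so Phi kills their product once equal neighbours are
   merged, or i_p = i_q and the coefficient between the two letters is
   x a_(p+1) ... a_(q-1) y with x, y in A_(i_p), which phi kills by freeness. *)

Definition upd (T : Type) (c : nat -> T) (j : nat) (v : T) : nat -> T :=
  fun l => if l == j then v else c l.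

Definition excise (T : Type) (e : nat -> T) (p k : nat) : nat -> T :=
  fun l => if (l < p)%N then e l else e (l + k)%N.

Definition mirrored (T : Type) (ka : nat -> T) (s : nat) : Prop :=
  forall l, (l < s)%N -> ka l = ka (s + s - 1 - l)%N.

Definition odd_palindrome (T : Type) (ind : nat -> T) (n : nat) : Prop :=
  odd n /\ forall l, (l < n)%N -> ind l = ind (n.-1 - l)%N.

Lemma add_morph0 (U V : zmodType) (f : U -> V) : {morph f : x y / x + y} -> f 0 = 0.
Proof. by move=> fD; apply/(addrI (f 0)); rewrite -fD !addr0. Qed.

Lemma nat_down_ind (Q : nat -> Prop) n : Q n ->
  (forall p, (p < n)%N -> Q p.+1 -> Q p) -> forall p, (p <= n)%N -> Q p.
Proof.
move=> Qn QS p pn; have [d nd] : exists d, n = (p + d)%N by exists (n - p)%N; lia.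
elim: d p pn nd => [|d IH] p pn nd; first by rewrite nd addn0 in Qn.
by apply: QS; [lia|apply: IH; lia].
Qed.

Lemma prod_nat_shift (T : pzSemiRingType) (e : nat -> T) m n :
  \prod_(m <= l < n) e l = \prod_(l < n - m) e (m + l)%N.
Proof.
by rewrite -{1}(add0n m) big_addn big_mkord; apply: eq_bigr => l _; rewrite addnC.
Qed.

Lemma prod_excise (T : pzSemiRingType) (e : nat -> T) s t k :
  \prod_(l < s + t) excise e s k l = \prod_(l < s) e l * \prod_(l < t) e (s + k + l)%N.
Proof.
rewrite big_split_ord; congr (_ * _); apply: eq_bigr => l _; rewrite /excise /=.
  by rewrite ltn_ord.
by rewrite ltnNge leq_addr /= addnAC.
Qed.

Lemma prod_upd (T : pzSemiRingType) (e : nat -> T) s t x :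
  \prod_(l < s.+1 + t) upd e s x l = \prod_(l < s) e l * x * \prod_(l < t) e (s.+1 + l)%N.
Proof.
rewrite big_split_ord big_ord_recr /= /upd eqxx; congr (_ * _ * _).
  by apply: eq_bigr => l _; rewrite ifN // neq_ltn ltn_ord.
by apply: eq_bigr => l _; rewrite ifN // neq_ltn ltnS leq_addr orbT.
Qed.

Lemma mirrored_excise2 (T : Type) (ka : nat -> T) s t : ka s = ka s.+1 ->
  (s.+1 = t.+1 /\ mirrored ka s.+1) <-> (s = t /\ mirrored (excise ka s 2) s).
Proof.
move=> ka_s; split=> [[st mir]|[st mir]]; split; try lia.
- move=> l hl; rewrite /excise ifT // ifF; last lia.
  by rewrite mir; [congr ka|]; lia.
- move=> l; rewrite ltnS leq_eqVlt => /orP [/eqP ->|hl].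
    by rewrite ka_s; congr ka; lia.
  have := mir l hl; rewrite /excise ifT // ifF; last lia.
  by move=> ->; congr ka; lia.
Qed.

Section InfinitesimalFreeness.
Variable R : realType.
Local Notation C := (R[i]).
Variables (A : algType C) (phi : A -> C) (I : Type) (Ai : I -> A -> Prop).

Hypothesis phi_lin : lin_functional phi.
Hypothesis phi1 : phi 1 = 1.
Hypothesis Ai_subalg : forall i, unital_subalgebra (Ai i).
Hypothesis Ai_free : forall (n : nat) (ind : nat -> I) (c : nat -> A),
  (0 < n)%N -> alternating ind n ->
  (forall l, (l < n)%N -> Ai (ind l) (c l) /\ phi (c l) = 0) ->
  phi (\prod_(l < n) c l) = 0.

Lemma phiD : {morph phi : x y / x + y}.
Proof. by move=> x y; have := phi_lin 1 x y; rewrite scale1r mul1r. Qed.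

Lemma phiZ k x : phi (k *: x) = k * phi x.
Proof. by have := phi_lin k x 0; rewrite !addr0 (add_morph0 phiD) addr0. Qed.

Lemma Ai1 i : Ai i 1.
Proof. by case: (Ai_subalg i). Qed.

Lemma AiZD i k x y : Ai i x -> Ai i y -> Ai i (k *: x + y).
Proof. by case: (Ai_subalg i) => _ AiZD _; apply: AiZD. Qed.

Lemma AiM i x y : Ai i x -> Ai i y -> Ai i (x * y).
Proof. by case: (Ai_subalg i) => _ _ AiM; apply: AiM. Qed.

Lemma AiZ1 i k : Ai i (k *: 1).
Proof.
have Ai0 : Ai i 0 by have := AiZD (-1) (Ai1 i) (Ai1 i); rewrite scaleN1r addNr.
by have := AiZD k (Ai1 i) Ai0; rewrite addr0.
Qed.

Definition centered (x : A) : A := x - phi x *: 1.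

Lemma phi_centered x : phi (centered x) = 0.
Proof. by rewrite /centered -scaleNr addrC phi_lin phi1 mulr1 addNr. Qed.

Lemma Ai_centered i x : Ai i x -> Ai i (centered x).
Proof. by move=> Aix; rewrite /centered addrC -scaleNr; apply: AiZD => //; apply: Ai1. Qed.

Lemma phi_centered_split P y Q :
  phi (P * y * Q) = phi (P * centered y * Q) + phi y * phi (P * Q).
Proof.
rewrite -{1}(subrK (phi y *: 1) y) mulrDr mulrDl phiD.
by rewrite -scalerAr mulr1 -scalerAl phiZ.
Qed.

Lemma phi_prod_range0 lo hi (e : nat -> A) (ind : nat -> I) : (lo < hi)%N ->
  (forall l, (lo <= l)%N -> (l.+1 < hi)%N -> ind l <> ind l.+1) ->
  (forall l, (lo <= l)%N -> (l < hi)%N -> Ai (ind l) (e l) /\ phi (e l) = 0) ->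
  phi (\prod_(lo <= l < hi) e l) = 0.
Proof.
move=> lo_hi alt Ae; rewrite prod_nat_shift.
apply: (Ai_free (ind := fun l => ind (lo + l)%N) (c := fun l => e (lo + l)%N)).
- by rewrite subn_gt0.
- by move=> l hl; rewrite /= addnS; apply: alt; lia.
- by move=> l hl; apply: Ae; lia.
Qed.

Lemma phi_prod_merge s t (e : nat -> A) (ka : nat -> I) :
  (forall l, (l < s.+2 + t)%N -> Ai (ka l) (e l) /\ phi (e l) = 0) ->
  (forall l, (l < s)%N -> ka l <> ka l.+1) ->
  (forall l, (s < l)%N -> (l.+1 < s.+2 + t)%N -> ka l <> ka l.+1) ->
  ka s = ka s.+1 ->
  phi (\prod_(l < s.+2 + t) e l) =
    phi (e s * e s.+1) * phi (\prod_(l < s + t) excise e s 2 l).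
Proof.
move=> Ae alt1 alt2 ka_s; set y := e s * e s.+1.
have Ay : Ai (ka s) (centered y).
  by apply/Ai_centered/AiM; [|rewrite ka_s]; apply: (proj1 (Ae _ _)); lia.
have -> : \prod_(l < s.+2 + t) e l = \prod_(l < s) e l * y * \prod_(l < t) e (s.+2 + l)%N.
  by rewrite big_split_ord /= !big_ord_recr /= mulrA.
rewrite phi_centered_split prod_excise addn2.
suff -> : phi (\prod_(l < s) e l * centered y * \prod_(l < t) e (s.+2 + l)%N) = 0.
  by rewrite add0r.
have -> : \prod_(l < s) e l * centered y * \prod_(l < t) e (s.+2 + l)%N =
    \prod_(l < s.+1 + t) upd (excise e s 1) s (centered y) l.
  rewrite prod_upd; congr (_ * _ * _); apply: eq_bigr => l _; rewrite /excise.
    by rewrite ltn_ord.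
  by rewrite ifF; [congr e; lia|lia].
apply: (Ai_free (ind := excise ka s.+1 1)) => [|l hl|l hl]; first lia.
- rewrite /excise; case: (ltngtP l s) => hls.
  + by rewrite !ifT; [exact: alt1|lia|lia].
  + by rewrite !ifF; [apply: alt2; lia|lia|lia].
  + by rewrite hls ltnSn ifF ?addn1 ?ka_s; [apply: alt2; lia|lia].
- rewrite /upd /excise; case: eqP => [->|ne]; first by rewrite ltnSn; split; [|exact: phi_centered].
  case: (ltngtP l s) => hls //.
  + by rewrite !ifT; [apply: Ae; lia|lia].
  + by rewrite !ifF; [apply: Ae; lia|lia].
Qed.

Lemma phi_prod_cat s : forall t (e : nat -> A) (ka : nat -> I),
  (forall l, (l < s + t)%N -> Ai (ka l) (e l) /\ phi (e l) = 0) ->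
  (forall l, (l.+1 < s)%N -> ka l <> ka l.+1) ->
  (forall l, (s <= l)%N -> (l.+1 < s + t)%N -> ka l <> ka l.+1) ->
  (s = t /\ mirrored ka s ->
     phi (\prod_(l < s + t) e l) = \prod_(l < s) phi (e l * e (s + s - 1 - l)%N)) /\
  (~ (s = t /\ mirrored ka s) -> phi (\prod_(l < s + t) e l) = 0).
Proof.
elim: s => [|s IH] [|t] e ka Ae alt1 alt2.
- by rewrite !big_ord0 phi1; split => // -[].
- have -> : phi (\prod_(l < 0 + t.+1) e l) = 0.
    by apply: (Ai_free (ind := ka)) => // l hl; apply: alt2.
  by split => // -[].
- have -> : phi (\prod_(l < s.+1 + 0) e l) = 0.
    by apply: (Ai_free (ind := ka)) => [|l hl|//]; [lia|apply: alt1; lia].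
  by split => // -[].
have [ka_s|ka_s] := classic (ka s = ka s.+1); last first.
  have -> : phi (\prod_(l < s.+1 + t.+1) e l) = 0.
    apply: (Ai_free (ind := ka)) => [|l hl|//]; first lia.
    by case: (ltngtP l s) => [hls|hls|->] //; [apply: alt1|apply: alt2]; lia.
  split=> // -[st mir]; case: ka_s; rewrite (mir s) //; congr ka; lia.
case: (IH t (excise e s 2) (excise ka s 2)) => [l hl|l hl|l hls hl|IH1 IH2].
- by rewrite /excise; case: ltnP => hls; apply: Ae; lia.
- by rewrite /excise !ifT; [apply: alt1; lia|lia|lia].
- by rewrite /excise !ifF; [apply: alt2; lia|lia|lia].
have mirE := mirrored_excise2 t ka_s.
rewrite (_ : s.+1 + t.+1 = s.+2 + t)%N in Ae alt2 *; last lia.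
rewrite (phi_prod_merge (ka := ka)) //.
split=> [/mirE/IH1 ->|nmir]; last by rewrite IH2 ?mulr0 // => /mirE/nmir.
rewrite big_ord_recr /= [RHS]mulrC; congr (_ * _).
  by congr (phi (_ * e _)); lia.
apply: eq_bigr => l _; have ls := ltn_ord l; rewrite /excise ltn_ord.
by rewrite ifF; [congr (phi (_ * e _)); lia|lia].
Qed.

Section CenteredWord.
Variables (n : nat) (ind : nat -> I) (a : nat -> A).
Hypothesis Aa : forall l, (l < n)%N -> Ai (ind l) (a l) /\ phi (a l) = 0.
Hypothesis alt : alternating ind n.

Lemma phi_prod_insert p x : (p < n)%N -> Ai (ind p) x ->
  phi (\prod_(l < p) a l * x * \prod_(p.+1 <= l < n) a l) =
  phi x * phi (\prod_(l < p) a l * \prod_(p.+1 <= l < n) a l).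
Proof.
move=> pn Ax; rewrite phi_centered_split.
suff -> : phi (\prod_(l < p) a l * centered x * \prod_(p.+1 <= l < n) a l) = 0.
  by rewrite add0r.
rewrite prod_nat_shift -prod_upd.
apply: (Ai_free (ind := ind)) => [|l hl|l hl]; first lia.
  by apply: alt; lia.
rewrite /upd; case: eqP => [->|_]; last by apply: Aa; lia.
by split; [exact: Ai_centered|exact: phi_centered].
Qed.

Lemma phi_prod_skip p : (p < n)%N ->
  ((n = (p + p).+1 /\ forall l, (l < p)%N -> ind l = ind (p + p - l)%N) ->
    phi (\prod_(l < p) a l * \prod_(p.+1 <= l < n) a l) =
    \prod_(l < p) phi (a l * a (p + p - l)%N)) /\
  (~ (n = (p + p).+1 /\ forall l, (l < p)%N -> ind l = ind (p + p - l)%N) ->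
    phi (\prod_(l < p) a l * \prod_(p.+1 <= l < n) a l) = 0).
Proof.
move=> pn; have -> : \prod_(l < p) a l * \prod_(p.+1 <= l < n) a l =
    \prod_(l < p + (n - p.+1)) excise a p 1 l by rewrite prod_excise prod_nat_shift addn1.
case: (@phi_prod_cat p (n - p.+1) (excise a p 1) (excise ind p 1))
  => [l hl|l hl|l hpl hl|mir nmir].
- by rewrite /excise; case: ltnP => _; apply: Aa; lia.
- by rewrite /excise !ifT; [apply: alt; lia|lia|lia].
- by rewrite /excise !ifF ?addn1; [apply: alt; lia|lia|lia].
have mirE : (n = (p + p).+1 /\ forall l, (l < p)%N -> ind l = ind (p + p - l)%N) <->
    (p = (n - p.+1)%N /\ mirrored (excise ind p 1) p).
  split=> -[np sym]; split; try lia; move=> l lp; move: (sym l lp).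
    by rewrite /excise ifT // ifF; [move=> ->; congr ind|]; lia.
  by rewrite /excise ifT // ifF; [move=> ->; congr ind|]; lia.
split=> [/mirE/mir ->|nsym]; last by apply: nmir => /mirE.
apply: eq_bigr => l _; have lp := ltn_ord l; rewrite /excise ltn_ord.
by rewrite ifF; [congr (phi (_ * a _)); lia|lia].
Qed.

Lemma phi_prod_skip_sym p : odd_palindrome ind n -> (p < n)%N ->
  phi (\prod_(l < p) a l * \prod_(p.+1 <= l < n) a l) =
  if p == n./2 then \prod_(l < n./2) phi (a l * a (n.-1 - l)%N) else 0.
Proof.
move=> [odd_n sym] pn; have [mir nmir] := phi_prod_skip pn.
have n2 : n = (n./2 + n./2).+1 by have := odd_double_half n; rewrite odd_n -addnn; lia.
case: eqP => [p_half|p_half]; last by apply: nmir => -[np _]; apply: p_half; lia.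
subst p; rewrite mir; last by split; [lia|move=> l lp; rewrite sym; [congr ind|]; lia].
by apply: eq_bigr => l _; have := ltn_ord l => lp; congr (phi (_ * a _)); lia.
Qed.

Lemma phi_prod_skip_asym p : ~ odd_palindrome ind n -> (p < n)%N ->
  phi (\prod_(l < p) a l * \prod_(p.+1 <= l < n) a l) = 0.
Proof.
move=> asym pn; have [_ nmir] := phi_prod_skip pn.
apply: nmir => -[np sym]; apply: asym; split; first by rewrite np addnn /= odd_double.
move=> l ln; case: (ltngtP l p) => lp.
- by rewrite sym //; congr ind; lia.
- by rewrite (sym (n.-1 - l)%N); [congr ind|]; lia.
- by rewrite lp; congr ind; lia.
Qed.

Lemma phi_sandwich0 p q x y : (p.+1 < q)%N -> (q < n)%N -> ind p = ind q ->
  Ai (ind p) x -> Ai (ind p) y ->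
  phi (x * \prod_(p.+1 <= l < q) a l * y) = 0.
Proof.
move=> pq qn ind_pq Ax Ay.
pose e := upd (upd a p (centered x)) q (centered y).
have e_free lo hi : (p <= lo)%N -> (lo < hi)%N -> (hi <= q.+1)%N ->
    phi (\prod_(lo <= l < hi) e l) = 0.
  move=> plo lohi hiq; apply: (phi_prod_range0 (ind := ind)) => // l lol lhi.
    by apply: alt; lia.
  rewrite /e /upd; case: eqP => [->|_].
    by split; [rewrite -ind_pq; exact: Ai_centered|exact: phi_centered].
  case: eqP => [->|_]; first by split; [exact: Ai_centered|exact: phi_centered].
  by apply: Aa; lia.
have eM : \prod_(p.+1 <= l < q) a l = \prod_(p.+1 <= l < q) e l.
  by apply: eq_big_nat => l hl; rewrite /e /upd !ifF //; apply/eqP; lia.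
have ex : e p = centered x by rewrite /e /upd ifF ?eqxx //; apply/eqP; lia.
have ey : e q = centered y by rewrite /e /upd eqxx.
rewrite -[x](subrK (phi x *: 1)) -[y](subrK (phi y *: 1)) eM.
rewrite -/(centered x) -/(centered y) -ex -ey; set M := \prod_(_ <= _ < _) _.
rewrite !mulrDl !mulrDr -!scalerAl -!scalerAr !mul1r !mulr1 !phiD !phiZ /M.
rewrite -mulrA -big_nat_recr -?big_ltn; try lia.
rewrite !e_free ?mulr0 ?addr0 //; lia.
Qed.
End CenteredWord.

Variables (F : lmodType C) (fmul : F -> F -> F) (lact : A -> F -> F) (ract : F -> A -> F).
Variables (Phi : F -> C) (Fi : I -> F -> Prop).

Hypothesis fmulA : forall x y z, fmul (fmul x y) z = fmul x (fmul y z).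
Hypothesis fmulZDl : forall (k : C) x y z, fmul (k *: x + y) z = k *: fmul x z + fmul y z.
Hypothesis fmulZDr : forall (k : C) x y z, fmul z (k *: x + y) = k *: fmul z x + fmul z y.
Hypothesis lactZD : forall (k : C) a (f g : F), lact a (k *: f + g) = k *: lact a f + lact a g.
Hypothesis ractZD : forall (k : C) a (f g : F), ract (k *: f + g) a = k *: ract f a + ract g a.
Hypothesis lact1 : forall f, lact 1 f = f.
Hypothesis ract1 : forall f, ract f 1 = f.
Hypothesis lactM : forall a b f, lact (a * b) f = lact a (lact b f).
Hypothesis ractM : forall a b f, ract f (a * b) = ract (ract f a) b.
Hypothesis lact_ract : forall a b f, lact a (ract f b) = ract (lact a f) b.
Hypothesis lact_fmul : forall a f g, lact a (fmul f g) = fmul (lact a f) g.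
Hypothesis ract_fmul : forall a f g, ract (fmul f g) a = fmul f (ract g a).
Hypothesis fmul_ract : forall a f g, fmul (ract f a) g = fmul f (lact a g).

Local Notation W := (wordF fmul lact ract).
Local Notation FP := (fprodF fmul).

Definition lin_map (h : F -> F) : Prop := forall (k : C) f g, h (k *: f + g) = k *: h f + h g.

Lemma lin_mapD h : lin_map h -> {morph h : f g / f + g}.
Proof. by move=> h_lin f g; have := h_lin 1 f g; rewrite !scale1r. Qed.

Lemma lin_map0 h : lin_map h -> h 0 = 0.
Proof. by move/lin_mapD/add_morph0. Qed.

Lemma lactD a : {morph lact a : f g / f + g}.
Proof. by apply: lin_mapD => k; apply: lactZD. Qed.

Lemma fmulDr f : {morph fmul f : g h / g + h}.
Proof. by apply: lin_mapD => k g h; apply: fmulZDr. Qed.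

Lemma lact0 a : lact a 0 = 0.
Proof. by apply: lin_map0 => k; apply: lactZD. Qed.

Lemma fmul0r f : fmul f 0 = 0.
Proof. by apply: lin_map0 => k g h; apply: fmulZDr. Qed.

Lemma fprodF_ext m g g' : (forall l, (l <= m)%N -> g l = g' l) -> FP g m = FP g' m.
Proof.
elim: m => [|m IH] gg' /=; first by rewrite gg'.
by rewrite IH ?gg' // => l lm; apply: gg'; apply: leqW.
Qed.

Lemma wordF_ext m c c' g g' : (forall l, (l <= m.+1)%N -> c l = c' l) ->
  (forall l, (l <= m)%N -> g l = g' l) -> W c g m = W c' g' m.
Proof.
elim: m => [|m IH] cc' gg' /=; first by rewrite !cc' ?gg'.
by rewrite IH ?cc' ?gg' // => l lm; [apply: cc'|apply: gg']; lia.
Qed.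

Lemma wordF_lact a c g m : lact a (W c g m) = W (upd c 0 (a * c 0%N)) g m.
Proof. by elim: m => [|m IH] /=; [rewrite lact_ract lactM|rewrite lact_fmul IH]. Qed.

Lemma wordF_ract a c g m : ract (W c g m) a = W (upd c m.+1 (c m.+1 * a)) g m.
Proof.
case: m => [|m] /=; first by rewrite /upd /= ractM.
rewrite ract_fmul /upd eqxx -ractM; congr fmul.
by apply: wordF_ext => // l lm; case: eqP => //; lia.
Qed.

Definition catf (T : Type) m (g g' : nat -> T) : nat -> T :=
  fun l => if (l < m.+1)%N then g l else g' (l - m.+1)%N.

(* The coefficients c m.+1 and c' 0 of adjacent words meet and multiply. *)
Definition catf_coef m (c c' : nat -> A) : nat -> A := fun l =>
  if (l < m.+1)%N then c l else if l == m.+1 then c m.+1 * c' 0%N else c' (l - m.+1)%N.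

Lemma wordF_cat m c g m' c' g' :
  fmul (W c g m) (W c' g' m') = W (catf_coef m c c') (catf m g g') (m.+1 + m')%N.
Proof.
elim: m' => [|m' IH].
  rewrite addn0 /=.
  have -> : W (catf_coef m c c') (catf m g g') m = ract (W c g m) (c' 0%N).
    rewrite wordF_ract; apply: wordF_ext => l lm; rewrite /catf_coef /upd /catf.
      by case: ltnP => ?; case: eqP => //; lia.
    by case: ltnP => //; lia.
  rewrite fmul_ract lact_ract /catf_coef /catf ltnn subnn.
  by rewrite ifF ?subSnn; [|lia]; rewrite ifF ?subSnn //; lia.
rewrite /= -fmulA IH addnS /=; congr (fmul _ (ract _ _)).
  by rewrite /catf; case: ltnP => ?; [lia|congr g'; lia].
rewrite /catf_coef; case: ltnP => ?; first lia.
by case: eqP => ?; [lia|congr c'; lia].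
Qed.

Lemma fprodF_upd_last m g f :
  FP (upd g m (fmul (g m) f)) m = fmul (FP g m) f.
Proof.
case: m => [|m] /=; first by rewrite /upd.
rewrite /upd eqxx fmulA; congr fmul.
by apply: fprodF_ext => l lm; case: eqP => //; lia.
Qed.

Hypothesis Phi_lin : lin_functional Phi.
Hypothesis Fi_subalg : forall i, subalgebraF fmul (Fi i).

Local Notation A0 := (genA (fun a => exists i, Ai i a)).
Local Notation F0 := (genF fmul (fun f => exists i, Fi i f)).

Hypothesis Phi_wordF : forall (n : nat) (c : nat -> A) (g : nat -> F),
  (0 < n)%N -> (forall l, (l <= n)%N -> A0 (c l)) -> (forall l, (l < n)%N -> F0 (g l)) ->
  Phi (W c g n.-1) = phi (c 0%N * c n) * (\prod_(1 <= l < n) phi (c l)) * Phi (FP g n.-1).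
Hypothesis Phi_fprodF_alternating : forall (n : nat) (ind : nat -> I) (g : nat -> F),
  (2 <= n)%N -> alternating ind n -> (forall l, (l < n)%N -> Fi (ind l) (g l)) ->
  Phi (FP g n.-1) = 0.

Lemma PhiD : {morph Phi : f g / f + g}.
Proof. by move=> f g; have := Phi_lin 1 f g; rewrite scale1r mul1r. Qed.

Lemma Phi0 : Phi 0 = 0.
Proof. exact: add_morph0 PhiD. Qed.

Lemma FiM i f g : Fi i f -> Fi i g -> Fi i (fmul f g).
Proof. by case: (Fi_subalg i) => _ _ FiM; apply: FiM. Qed.

Definition is_word (PA : A -> Prop) m (c : nat -> A) (g : nat -> F) (k : nat -> I) : Prop :=
  (forall l, (l <= m.+1)%N -> PA (c l)) /\ (forall l, (l <= m)%N -> Fi (k l) (g l)).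

Lemma Phi_word m c g k : is_word A0 m c g k ->
  Phi (W c g m) = phi (c 0%N * c m.+1) * (\prod_(1 <= l < m.+1) phi (c l)) * Phi (FP g m).
Proof.
case=> Ac Fg; apply: (Phi_wordF (n := m.+1)) => // l lm.
by apply: genF_base; exists (k l); apply: Fg.
Qed.

(* Adjacent letters from the same F_i are multiplied together. *)
Lemma fprodF_alternating_form m g k : (forall l, (l <= m)%N -> Fi (k l) (g l)) ->
  exists m' g' k', [/\ FP g m = FP g' m', (forall l, (l <= m')%N -> Fi (k' l) (g' l)),
    alternating k' m'.+1, k' 0%N = k 0%N &
    (m' = 0%N -> forall l, (l <= m)%N -> k l = k 0%N)].
Proof.
elim: m => [|m IH] Fg.
  by exists 0%N, g, k; split => // _ l; rewrite leqn0 => /eqP ->.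
have [|m' [g' [k' [FPg Fg' alt' k'0 const]]]] := IH.
  by move=> l lm; apply: Fg; apply: leqW.
have [k'_last|k'_last] := classic (k' m' = k m.+1).
  exists m', (upd g' m' (fmul (g' m') (g m.+1))), k'; split => //.
  - by rewrite fprodF_upd_last /= FPg.
  - move=> l lm; rewrite /upd; case: eqP => [->|_]; last exact: Fg'.
    by apply: FiM; [exact: Fg'|rewrite k'_last; apply: Fg].
  - move=> m'0 l; rewrite leq_eqVlt => /orP [/eqP ->|lm]; last exact: const.
    by rewrite -k'_last m'0 k'0.
exists m'.+1, (upd g' m'.+1 (g m.+1)), (upd k' m'.+1 (k m.+1)); split => //.
- rewrite /= FPg {2}/upd eqxx; congr fmul.
  by apply: fprodF_ext => l lm; rewrite /upd; case: eqP => //; lia.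
- move=> l lm; rewrite /upd; case: eqP => [_|?]; first exact: Fg.
  by apply: Fg'; lia.
- move=> l lm; rewrite /upd; case: eqP => [?|_]; first lia.
  by case: eqP => [?|?]; [have -> : l = m' by lia|apply: alt'; lia].
Qed.

Lemma Phi_fprodF_mixed0 m g k : (forall l, (l <= m)%N -> Fi (k l) (g l)) ->
  (exists l, (l <= m)%N /\ k l <> k 0%N) -> Phi (FP g m) = 0.
Proof.
move=> Fg [l0 [l0m kl0]].
have [m' [g' [k' [-> Fg' alt' _ const]]]] := fprodF_alternating_form Fg.
case: m' Fg' alt' const => [|m'] Fg' alt' const; first by case: kl0; apply: const.
by apply: (Phi_fprodF_alternating (n := m'.+2) (ind := k')) => // l lm; apply: Fg'.
Qed.

Lemma Phi_word0 m c g k : is_word A0 m c g k ->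
  (exists l, (l <= m)%N /\ k l <> k 0%N) \/
  (exists l, [/\ (1 <= l)%N, (l <= m)%N & phi (c l) = 0]) ->
  Phi (W c g m) = 0.
Proof.
move=> w; rewrite (Phi_word w) => -[mixed|[l [l1 lm cl]]].
  by rewrite (Phi_fprodF_mixed0 (proj2 w) mixed) mulr0.
suff /eqP -> : \prod_(1 <= l < m.+1) phi (c l) == 0 by rewrite mulr0 mul0r.
by rewrite prodf_seq_eq0; apply/hasP; exists l; rewrite ?mem_index_iota ?cl ?eqxx //; lia.
Qed.

Inductive span (P : F -> Prop) : F -> Prop :=
| span0 : span P 0
| span_base f : P f -> span P f
| spanZD (k : C) f g : span P f -> span P g -> span P (k *: f + g).

Lemma spanD P f g : span P f -> span P g -> span P (f + g).
Proof. by move=> Pf Pg; have := spanZD 1 Pf Pg; rewrite scale1r. Qed.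

Lemma span_bind (h : F -> F) (P Q : F -> Prop) : lin_map h ->
  (forall g, P g -> span Q (h g)) -> forall f, span P f -> span Q (h f).
Proof.
move=> h_lin PQ f; elim=> [|g Pg|k g g' _ Qg _ Qg']; last by rewrite h_lin; apply: spanZD.
  by rewrite lin_map0 //; apply: span0.
exact: PQ.
Qed.

Lemma span_sub (P Q : F -> Prop) f : (forall g, P g -> Q g) -> span P f -> span Q f.
Proof. by move=> PQ; apply: (span_bind (h := id)) => // g /PQ; apply: span_base. Qed.

Lemma span_lact P a f : (forall g, P g -> P (lact a g)) -> span P f -> span P (lact a f).
Proof.
move=> Pa; apply: (span_bind (h := lact a)) => [k g g'|g /Pa]; first exact: lactZD.
exact: span_base.
Qed.

Lemma span_ract P a f : (forall g, P g -> P (ract g a)) -> span P f -> span P (ract f a).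
Proof.
move=> Pa; apply: (span_bind (h := ract^~ a)) => [k g g'|g /Pa]; first exact: ractZD.
exact: span_base.
Qed.

Lemma span_fmul P f g : (forall u v, P u -> P v -> P (fmul u v)) ->
  span P f -> span P g -> span P (fmul f g).
Proof.
move=> PM Pf Pg; apply: (span_bind (h := fmul^~ g)) Pf => [k u v|u Pu]; first exact: fmulZDl.
by apply: (span_bind (h := fmul u)) Pg => [k v w|v Pv]; [apply: fmulZDr|apply/span_base/PM].
Qed.

Lemma A0_Ai i x : Ai i x -> A0 x.
Proof. by move=> Aix; apply: genA_base; exists i. Qed.

Lemma A0M x y : A0 x -> A0 y -> A0 (x * y).
Proof. exact: genA_mul. Qed.

Lemma is_word_A0 i m c g k : is_word (Ai i) m c g k -> is_word A0 m c g k.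
Proof. by case=> Ac Fg; split => // l lm; apply: A0_Ai (Ac l lm). Qed.

Section WordClosure.
Variable PA : A -> Prop.
Hypothesis PAM : forall x y, PA x -> PA y -> PA (x * y).

Lemma is_word_lact a m c g k :
  PA a -> is_word PA m c g k -> is_word PA m (upd c 0 (a * c 0%N)) g k.
Proof.
move=> PAa [Ac Fg]; split => // l lm; rewrite /upd; case: eqP => _; last exact: Ac.
by apply: PAM => //; apply: Ac.
Qed.

Lemma is_word_ract a m c g k :
  PA a -> is_word PA m c g k -> is_word PA m (upd c m.+1 (c m.+1 * a)) g k.
Proof.
move=> PAa [Ac Fg]; split => // l lm; rewrite /upd; case: eqP => _; last exact: Ac.
by apply: PAM => //; apply: Ac.
Qed.

Lemma is_word_cat m c g k m' c' g' k' :
  is_word PA m c g k -> is_word PA m' c' g' k' ->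
  is_word PA (m.+1 + m') (catf_coef m c c') (catf m g g') (catf m k k').
Proof.
move=> [Ac Fg] [Ac' Fg']; split=> l lm; rewrite /catf_coef /catf; case: ltnP => lm'.
- by apply: Ac; lia.
- by case: eqP => _; [apply: PAM; [apply: Ac|apply: Ac']|apply: Ac'; lia].
- by apply: Fg; lia.
- by apply: Fg'; lia.
Qed.

End WordClosure.

Definition word_over i f :=
  exists m c g, f = W c g m /\ is_word (Ai i) m c g (fun _ => i).
Definition word f := exists m c g k, f = W c g m /\ is_word A0 m c g k.
Definition word_from j f := exists m c g k,
  [/\ f = W c g m, is_word A0 m c g k, k 0%N = j & Ai j (c 0%N)].

Lemma word_over_lact i a f : Ai i a -> word_over i f -> word_over i (lact a f).
Proof.
move=> Aa [m [c [g [-> w]]]]; exists m, (upd c 0 (a * c 0%N)), g.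
by split; [exact: wordF_lact|exact: (is_word_lact (@AiM i) Aa w)].
Qed.

Lemma word_over_ract i a f : Ai i a -> word_over i f -> word_over i (ract f a).
Proof.
move=> Aa [m [c [g [-> w]]]]; exists m, (upd c m.+1 (c m.+1 * a)), g.
by split; [exact: wordF_ract|exact: (is_word_ract (@AiM i) Aa w)].
Qed.

Lemma word_over_fmul i f f' : word_over i f -> word_over i f' -> word_over i (fmul f f').
Proof.
move=> [m [c [g [-> w]]]] [m' [c' [g' [-> w']]]].
exists (m.+1 + m')%N, (catf_coef m c c'), (catf m g g'); split; first exact: wordF_cat.
have [Ac Fg] := is_word_cat (@AiM i) w w'.
by split => // l lm; have := Fg l lm; rewrite /catf; case: ltnP.
Qed.

Lemma word_lact a f : A0 a -> word f -> word (lact a f).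
Proof.
move=> A0a [m [c [g [k [-> w]]]]]; exists m, (upd c 0 (a * c 0%N)), g, k.
by split; [exact: wordF_lact|exact: (is_word_lact A0M A0a w)].
Qed.

Lemma word_ract a f : A0 a -> word f -> word (ract f a).
Proof.
move=> A0a [m [c [g [k [-> w]]]]]; exists m, (upd c m.+1 (c m.+1 * a)), g, k.
by split; [exact: wordF_ract|exact: (is_word_ract A0M A0a w)].
Qed.

Lemma word_fmul f f' : word f -> word f' -> word (fmul f f').
Proof.
move=> [m [c [g [k [-> w]]]]] [m' [c' [g' [k' [-> w']]]]].
exists (m.+1 + m')%N, (catf_coef m c c'), (catf m g g'), (catf m k k').
by split; [exact: wordF_cat|exact: (is_word_cat A0M w w')].
Qed.

Lemma word_over_word i f : word_over i f -> word f.
Proof.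
move=> [m [c [g [-> w]]]]; exists m, c, g, (fun _ => i).
by split => //; apply: is_word_A0 w.
Qed.

Lemma Bsub_span i x : Bsub fmul lact ract (Ai i) (Fi i) x ->
  Ai i x.1 /\ span (word_over i) x.2.
Proof.
elim=> {x} [x [[Ax1 ->]|[k [-> Fx2]]]|||].
- by split => //; exact: span0.
- split; first exact: AiZ1.
  apply: span_base; exists 0%N, (fun _ => 1), (fun _ => x.2).
  by split; [rewrite /= lact1 ract1|split => l _ //; exact: Ai1].
- by split; [exact: Ai1|exact: span0].
- by move=> k x y _ [Ax1 Sx2] _ [Ay1 Sy2]; split; [exact: AiZD|exact: spanZD].
- move=> x y _ [Ax1 Sx2] _ [Ay1 Sy2]; split; first exact: AiM.
  apply: spanD; first apply: spanD.
  + by apply: span_lact Sy2 => f; exact: word_over_lact.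
  + by apply: span_ract Sx2 => f; exact: word_over_ract.
  + by apply: span_fmul Sx2 Sy2 => u v; exact: word_over_fmul.
Qed.

Lemma word_from_ract j w a : word_over j w -> A0 a -> word_from j (ract w a).
Proof.
move=> [m [c [g [-> w_j]]]] A0a.
have w0 := is_word_A0 w_j.
exists m, (upd c m.+1 (c m.+1 * a)), g, (fun _ => j); split => //.
- exact: wordF_ract.
- exact: (is_word_ract A0M A0a w0).
- by rewrite /upd /=; apply: (proj1 w_j).
Qed.

Lemma word_from_fmul j w v : word_over j w -> word v -> word_from j (fmul w v).
Proof.
move=> [m [c [g [-> w_j]]]] [m' [c' [g' [k' [-> w']]]]].
have w0 := is_word_A0 w_j.
exists (m.+1 + m')%N, (catf_coef m c c'), (catf m g g'), (catf m (fun _ => j) k').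
split => //; first exact: wordF_cat.
- exact: (is_word_cat A0M w0 w').
- by rewrite /catf_coef /=; apply: (proj1 w_j).
Qed.

(* When i = j the two words meet in the coefficient c m.+1 * M * c' 0. *)
Lemma Phi_cross_word0 i j w u L M : word_over i w -> word_from j u -> A0 L -> A0 M ->
  (i <> j \/ (i = j /\ forall x y, Ai i x -> Ai i y -> phi (x * M * y) = 0)) ->
  Phi (lact L (fmul (ract w M) u)) = 0.
Proof.
move=> [m [c [g [-> w_i]]]] [m' [c' [g' [k' [-> w' k'0 c'0]]]]] L0 M0 ij.
rewrite wordF_ract wordF_cat wordF_lact.
have w0 : is_word A0 m (upd c m.+1 (c m.+1 * M)) g (fun _ => i).
  exact: (is_word_ract A0M M0 (is_word_A0 w_i)).
apply: Phi_word0; first exact: (is_word_lact A0M L0 (is_word_cat A0M w0 w')).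
case: ij => [ij|[ij phi_iMj]].
  left; exists m.+1; split; first lia.
  by rewrite /catf ltnn subnn k'0 ltn0Sn; apply: nesym.
right; exists m.+1; split => //; first lia.
rewrite {1}/upd /= /catf_coef ltnn eqxx /upd eqxx.
by apply: phi_iMj; [apply: (proj1 w_i)|rewrite ij].
Qed.

Lemma Phi_span (h : F -> F) P gam : lin_map h ->
  (forall g, P g -> Phi (h g) = gam * Phi g) ->
  forall f, span P f -> Phi (h f) = gam * Phi f.
Proof.
move=> h_lin Ph f; elim=> [|g Pg|k u v _ Pu _ Pv]; first by rewrite lin_map0 // Phi0 mulr0.
  exact: Ph.
by rewrite h_lin !Phi_lin Pu Pv mulrDr mulrCA.
Qed.

Lemma Phi_span0 (h : F -> F) P : lin_map h ->
  (forall g, P g -> Phi (h g) = 0) -> forall f, span P f -> Phi (h f) = 0.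
Proof.
move=> h_lin Ph f Pf; rewrite -(mul0r (Phi f)); apply: Phi_span Pf => // g Pg.
by rewrite Ph ?mul0r.
Qed.

Lemma Phi_word_over_sandwich i L Rr gam w : A0 L -> A0 Rr -> word_over i w ->
  (forall x, Ai i x -> phi (L * x * Rr) = gam * phi x) ->
  Phi (lact L (ract w Rr)) = gam * Phi w.
Proof.
move=> L0 R0 [m [c [g [-> w_i]]]] phi_LR.
have w0 := is_word_A0 w_i.
have wLR := is_word_lact A0M L0 (is_word_ract A0M R0 w0).
rewrite wordF_ract wordF_lact (Phi_word wLR) (Phi_word w0) /upd /= eqxx.
have -> : \prod_(1 <= l < m.+1) phi (if l == 0%N then L * c 0%N
    else if l == m.+1 then c m.+1 * Rr else c l) = \prod_(1 <= l < m.+1) phi (c l).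
  by apply: eq_big_nat => l lm; rewrite !ifF //; lia.
rewrite !mulrA -(mulrA L) phi_LR -?mulrA //.
by apply: AiM; apply: (proj1 w_i).
Qed.

Section Product.
Variables (n : nat) (ind : nat -> I) (b : nat -> Btype A F).
Hypothesis alt : alternating ind n.
Hypothesis Bb : forall l, (l < n)%N ->
  Bsub fmul lact ract (Ai (ind l)) (Fi (ind l)) (b l) /\ phiB phi (b l) = 0.

Local Notation a := (fun l => (b l).1).
Local Notation f := (fun l => (b l).2).

Lemma Aa l : (l < n)%N -> Ai (ind l) (a l) /\ phi (a l) = 0.
Proof. by move=> ln; have [/Bsub_span[Aal _] phib] := Bb ln. Qed.

Lemma f_span l : (l < n)%N -> span (word_over (ind l)) (f l).
Proof. by move=> ln; have [/Bsub_span[_ Sfl] _] := Bb ln. Qed.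

Definition bprod_from p : Btype A F :=
  foldr (fun l acc => bmul fmul lact ract (b l) acc) (bone A F) (iota p (n - p)).

Lemma bprod_from_n : bprod_from n = bone A F.
Proof. by rewrite /bprod_from subnn. Qed.

Lemma bprod_fromS p : (p < n)%N -> bprod_from p = bmul fmul lact ract (b p) (bprod_from p.+1).
Proof. by move=> pn; rewrite /bprod_from (_ : n - p = (n - p.+1).+1)%N; last lia. Qed.

Lemma bprod_from_fst p : (bprod_from p).1 = \prod_(p <= l < n) a l.
Proof. by rewrite /bprod_from unlock /index_iota; elim: (iota p (n - p)) => //= l s ->. Qed.

Lemma A0_prod lo hi : (hi <= n)%N -> A0 (\prod_(lo <= l < hi) a l).
Proof.
move=> hin; rewrite big_seq_cond; elim/big_ind: _ => //; [exact: genA_one|exact: A0M|].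
move=> l /andP [+ _]; rewrite mem_index_iota => lohi.
by apply: (A0_Ai (proj1 (Aa (l := l) _))); lia.
Qed.

Lemma A0_prod_ord p : (p <= n)%N -> A0 (\prod_(l < p) a l).
Proof. by move=> pn; rewrite -(big_mkord xpredT a); exact: A0_prod. Qed.

Lemma bprod_from_words p : (p <= n)%N ->
  A0 (bprod_from p).1 /\ span word (bprod_from p).2.
Proof.
move: p; apply: nat_down_ind; first by rewrite bprod_from_n; split; [exact: genA_one|exact: span0].
move=> p pn [A0p Sp]; rewrite bprod_fromS //=.
have A0a : A0 (a p) by apply: (A0_Ai (proj1 (Aa pn))).
have Sf : span word (f p) by apply: span_sub (f_span pn) => g; exact: word_over_word.
split; first exact: A0M.
apply: spanD; first apply: spanD.
- by apply: span_lact Sp => g; exact: word_lact.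
- by apply: span_ract Sf => g; exact: word_ract.
- by apply: span_fmul Sf Sp => u v; exact: word_fmul.
Qed.

Lemma phi_sandwich_ind p q : (p < q)%N -> (q < n)%N -> ind p = ind q ->
  forall x y, Ai (ind p) x -> Ai (ind p) y ->
  phi (x * \prod_(p.+1 <= l < q) a l * y) = 0.
Proof.
move=> pq qn ind_pq x y Ax Ay.
have pq1 : (p.+1 < q)%N.
  case: (ltngtP p.+1 q) => // pq1; first lia.
  by case: (alt (l := p)); [lia|rewrite pq1].
exact: (phi_sandwich0 (a := fun l => (b l).1) Aa alt pq1 qn ind_pq Ax Ay).
Qed.

Lemma Phi_cross_terms0 p w q : (p < n)%N -> word_over (ind p) w ->
  (q <= n)%N -> (p < q)%N ->
  Phi (lact (\prod_(l < p) a l)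
         (fmul (ract w (\prod_(p.+1 <= l < q) a l)) (bprod_from q).2)) = 0.
Proof.
move=> pn w_p; have L0 := A0_prod_ord (ltnW pn); set L := \prod_(l < p) a l.
move: q; apply: nat_down_ind => [_|q qn IH pq].

  by rewrite bprod_from_n /= fmul0r lact0 Phi0.
set M := \prod_(p.+1 <= l < q) a l; have M0 : A0 M by apply: A0_prod; lia.
have [A0q Sq] := bprod_from_words qn.
have ij : ind p <> ind q \/
    (ind p = ind q /\ forall x y, Ai (ind p) x -> Ai (ind p) y -> phi (x * M * y) = 0).
  have [ind_pq|] := classic (ind p = ind q); last by left.
  by right; split => //; apply: phi_sandwich_ind.
rewrite bprod_fromS //= !fmulDr !lactD !PhiD -fmul_ract -ractM.
rewrite (_ : M * a q = \prod_(p.+1 <= l < q.+1) a l); last by rewrite big_nat_recr //=; lia.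
rewrite IH ?add0r; last lia.
have -> : Phi (lact L (fmul (ract w M) (ract (b q).2 (bprod_from q.+1).1))) = 0.
  apply: (Phi_span0 (h := fun v => lact L (fmul (ract w M) (ract v (bprod_from q.+1).1))))
    (f_span qn) => [k u v|v v_q]; first by rewrite ractZD fmulZDr lactZD.
  exact: Phi_cross_word0 w_p (word_from_ract v_q A0q) L0 M0 ij.
rewrite add0r.
apply: (Phi_span0 (h := fun v => lact L (fmul (ract w M) (fmul v (bprod_from q.+1).2))))
  (f_span qn) => [k u v|v v_q]; first by rewrite fmulZDl fmulZDr lactZD.
apply: (Phi_span0 (h := fun u => lact L (fmul (ract w M) (fmul v u)))) Sq => [k u u'|u u_w].
  by rewrite fmulZDr fmulZDr lactZD.
exact: Phi_cross_word0 w_p (word_from_fmul v_q u_w) L0 M0 ij.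
Qed.

Lemma Phi_bprod_from (gam : nat -> C) :
  (forall p, (p < n)%N -> forall x, Ai (ind p) x ->
     phi (\prod_(l < p) a l * x * \prod_(p.+1 <= l < n) a l) = gam p * phi x) ->
  forall p, (p <= n)%N ->
  Phi (lact (\prod_(l < p) a l) (bprod_from p).2) = \sum_(p <= q < n) gam q * Phi (f q).
Proof.
move=> phi_gam; apply: nat_down_ind; first by rewrite bprod_from_n /= lact0 Phi0 big_geq.
move=> p pn IH; rewrite bprod_fromS //= !lactD !PhiD (big_ltn pn).
rewrite -lactM -(big_ord_recr p a) /= IH bprod_from_fst addrC.
have L0 := A0_prod_ord (ltnW pn); set L := \prod_(l < p) a l.
have R0 : A0 (\prod_(p.+1 <= l < n) a l) by exact: A0_prod.
rewrite (Phi_span (h := fun v => lact L (ract v (\prod_(p.+1 <= l < n) a l))) (gam := gam p)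
  _ _ (f_span pn)); first last.
- by move=> w w_p; apply: Phi_word_over_sandwich L0 R0 w_p _; apply: phi_gam.
- by move=> k u v; rewrite ractZD lactZD.
rewrite (Phi_span0 (h := fun v => lact L (fmul v (bprod_from p.+1).2)) _ _ (f_span pn))
  => [|k u v|w w_p]; first by rewrite add0r addrC.
  by rewrite fmulZDl lactZD.
have := Phi_cross_terms0 pn w_p pn (ltnSn p).
by rewrite big_geq // ract1.
Qed.

End Product.

Lemma inf_free_Bsub : inf_free fmul lact ract phi Phi (fun i => Bsub fmul lact ract (Ai i) (Fi i)).
Proof.
move=> n ind b n0 alt Bb; cbv zeta.
have Aa := Aa Bb.
have bprod0 : bprod fmul lact ract b n = bprod_from n b 0 by rewrite /bprod_from subn0.
have Phi_bprod gam : (forall p, (p < n)%N -> forall x, Ai (ind p) x ->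
     phi (\prod_(l < p) (b l).1 * x * \prod_(p.+1 <= l < n) (b l).1) = gam p * phi x) ->
   phi'B Phi (bprod fmul lact ract b n) = \sum_(0 <= q < n) gam q * Phi (b q).2.
  by move=> phi_gam; rewrite /phi'B bprod0 -(Phi_bprod_from alt Bb phi_gam) // big_ord0 lact1.
split.
- by rewrite /phiB bprod0 bprod_from_fst big_mkord; apply: Ai_free Aa.
- move=> sym; rewrite (Phi_bprod (fun p => if p == n./2 then
    \prod_(l < n./2) phi ((b l).1 * (b (n.-1 - l)%N).1) else 0)).
    under eq_bigr => q _ do rewrite (fun_if (fun c => c * Phi (b q).2)) mul0r.
    rewrite -big_mkcond big_nat1_eq ifT //; case: sym => /odd_gt0 + _; lia.
  move=> p pn x Ax.
  by rewrite (phi_prod_insert Aa alt pn Ax) (phi_prod_skip_sym Aa alt sym pn) mulrC.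
- move=> asym; rewrite (Phi_bprod (fun _ => 0)); first by rewrite big1 // => q _; rewrite mul0r.
  move=> p pn x Ax.
  by rewrite (phi_prod_insert Aa alt pn Ax) (phi_prod_skip_asym Aa alt asym pn) mulr0 mul0r.
Qed.

End InfinitesimalFreeness.

Theorem corollary3p7 (R : realType) (A : algType R[i]) (F : lmodType R[i])
    (fmul : F -> F -> F) (lact : A -> F -> F) (ract : F -> A -> F)
    (phi : A -> R[i]) (Phi : F -> R[i])
    (I : Type) (Ai : I -> A -> Prop) (Fi : I -> F -> Prop) :
  (* (A, phi, F, Phi) is a ncps of type B' *)
  lin_functional phi -> phi 1 = 1 ->
  bimodule_algebra fmul lact ract -> lin_functional Phi ->
  (* the A_i are unital subalgebras of A, the F_i subalgebras of F *)
  (forall i, unital_subalgebra (Ai i)) ->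
  (forall i, subalgebraF fmul (Fi i)) ->
  Bprime_free fmul lact ract phi Phi Ai Fi ->
  inf_free fmul lact ract phi Phi
    (fun i => Bsub fmul lact ract (Ai i) (Fi i)).
Proof.
move=> phi_lin phi1 bimod Phi_lin Ai_subalg Fi_subalg [Ai_free Phi_wordF Phi_alt].
case: bimod => fmulA [fmulZDl [fmulZDr [_ [lactZD [_ [ractZD [lact1 [ract1 [lactM [ractM
  [lact_ract [lact_fmul [ract_fmul fmul_ract]]]]]]]]]]]]].
by apply: inf_free_Bsub.
Qed.
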